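(* (1) For all $1\le i,j\le d$, $v^{ij}(-1,-1)\mathbf 1=2L_r^{ij}(-2)\mathbf 1$ in $M_r$. (2) For $1\le i,j\le d$ with $i\ne j$ and $m,n\in\mathbb Z_{<0}$, $v^{ij}(m-1,n)\mathbf 1=-\frac1m L_r^{ii}(-1)v^{ij}(m,n)\mathbf 1$. (3) For $1\le i,j\le d$ with $i\ne j$ and $m,n\in\mathbb Z_{<0}$, $v^{ii}(m-1,n)\mathbf 1=\frac{2}{m(m+n-1)}L_r^{ii}(0)L_r^{ij}(-1)v^{ij}(n,m)\mathbf 1$.
   Context: Fix an integer $d\ge 2$ and $r\in\mathbb{C}$. Let $\hat{\mathfrak h}$ be the complex Lie algebra with basis $\{v^i(m)\mid 1\le i\le d,\ m\in\mathbb{Z}\}\cup\{\mathbf c\}$ and bracket $[v^i(m),v^j(n)]=\delta_{m+n,0}\delta_{i,j}\,m\,\mathbf c$, $[\mathbf c,\hat{\mathfrak h}]=0$. In $A=U(\hat{\mathfrak h})/\langle \mathbf c-1\rangle$ let $v^{ij}(m,n)$ be the image of $v^i(m)v^j(n)$; then $v^{ij}(m,n)=v^{ji}(n,m)$ unless $i=j$ and $m=-n$, and $v^{ii}(m,-m)=v^{ii}(-m,m)+m$. Let $\mathcal B=\{v^{ii}(m,n)\mid 1\le i\le d,\ m\le n\}\cup\{v^{ij}(m,n)\mid 1\le i<j\le d,\ m,n\in\mathbb Z\}$; then $\mathcal B\cup\{1\}$ is linearly independent, $\mathcal L:=\mathrm{span}_{\mathbb C}\mathcal B\oplus\mathbb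 C\subset A$ contains every $v^{ij}(m,n)$ and is closed under $[x,y]=xy-yx$. With $\pi_1,\pi_2$ the projections of $\mathcal L$ onto $\mathrm{span}\,\mathcal B$ and onto $\mathbb C$, $[x,y]_r=\pi_1([x,y])+r\pi_2([x,y])$ is a Lie bracket on $\mathcal L$; call this Lie algebra $\mathcal L_r$. Let $\mathcal B_+=\{v^{ij}(m,n)\in\mathcal B\mid m\ge 0\text{ or }n\ge 0\}$, $\mathcal L_r^+=\mathrm{span}\,\mathcal B_+\oplus\mathbb C$, and $M_r=U(\mathcal L_r)\otimes_{U(\mathcal L_r^+)}\mathbb C\mathbf 1$, where $\mathcal B_+$ acts by $0$ on $\mathbf 1$ and $s\in\mathbb C\subset\mathcal L_r$ acts by the scalar $s$. Define operators on $M_r$: $L_r^{ij}(m)=\frac12\sum_{h\in\mathbb Z}v^{ij}(m-h,h)$ if $i\ne j$ or $m\ne0$, and $L_r^{ii}(0)=\frac12 v^{ii}(0,0)+\sum_{h>0}v^{ii}(-h,h)$ (on each vector only finitely many terms are nonzero). *)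

From HB Require Import structures.
From mathcomp Require Import all_boot all_order all_algebra.
From mathcomp Require Import complex.
From mathcomp Require Import reals Rstruct.

Set Implicit Arguments.
Unset Strict Implicit.
Unset Printing Implicit Defensive.
Import Order.TTheory GRing.Theory Num.Theory.
Local Open Scope ring_scope.

Definition CC : fieldType := (Rdefinitions.R)[i]%C.

(* Formal linear combinations of words over an alphabet T: the tensor
   algebra T(V) of the vector space V with basis T, with basis the words
   (seq T).  A vector is a function (seq T -> CC) (coefficient of each
   word); all vectors used below are finitely supported.               *)
Definition Vec (T : eqType) := seq T -> CC.

Definition e (T : eqType) (w : seq T) : Vec T := fun t => (t == w)%:R.

Definition comb (T : eqType) (s : seq (CC * seq T)) : Vec T :=
  fun t => \sum_(p <- s) p.1 * e p.2 t.

Inductive span (T : eqType) (G : Vec T -> Prop) : Vec T -> Prop :=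
| span0 : span G (fun _ => 0)
| span_gen v : G v -> span G v
| span_add v w : span G v -> span G w -> span G (fun t => v t + w t)
| span_scale (a : CC) v : span G v -> span G (fun t => a * v t).

(* The algebra A = U(hat h)/<c - 1>, presented as a quotient of the
   tensor algebra of hat h.  Basis letters of hat h:
     Some (i, m) = v^i(m)   (1 <= i <= d, m in Z),     None = c.       *)
Definition hlet := option (nat * int).

Definition valid_h (d : nat) (a : hlet) : bool :=
  if a is Some (i, _) then (1 <= i <= d)%N else true.

Definition hbr (a b : hlet) : seq (CC * seq hlet) :=
  match a, b with
  | Some (i, m), Some (j, n) =>
      if (i == j) && (m + n == 0) then [:: (m%:~R, [:: None])] else [::]
  | _, _ => [::]
  end.

(* generators of the two-sided ideal of T(hat h) whose quotient is
   A = U(hat h)/<c - 1> *)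
Inductive genA (d : nat) : Vec hlet -> Prop :=
| genA_br (u w : seq hlet) (a b : hlet) :
    valid_h d a -> valid_h d b ->
    genA d (fun t => e (u ++ a :: b :: w) t - e (u ++ b :: a :: w) t
                     - \sum_(p <- hbr a b) p.1 * e (u ++ p.2 ++ w) t)
| genA_c (u w : seq hlet) :
    genA d (fun t => e (u ++ None :: w) t - e (u ++ w) t).

Definition eqA (d : nat) (x y : Vec hlet) : Prop :=
  span (genA d) (fun t => x t - y t).

(* The Lie algebra L_r, with basis  B  u  {1}.  Letters:
     Some (i, j, m, n) = v^{ij}(m,n)  (an element of B when valid_L),
     None              = the element 1 of C (the summand C of L).     *)
Definition llet := option (nat * nat * int * int).

Definition valid_L (d : nat) (l : llet) : bool :=
  match l with
  | Some (i, j, m, n) =>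
      [&& (1 <= i <= d)%N, (1 <= j <= d)%N &
          (i < j)%N || ((i == j) && (m <= n))]
  | None => true
  end.

Definition Bplus (d : nat) (l : llet) : bool :=
  match l with
  | Some (i, j, m, n) => valid_L d l && ((0 <= m) || (0 <= n))
  | None => false
  end.

(* image in A of a basis element of L: v^{ij}(m,n) |-> v^i(m) v^j(n),
   1 |-> 1 *)
Definition wordA (l : llet) : seq hlet :=
  if l is Some (i, j, m, n) then [:: Some (i, m); Some (j, n)] else [::].

(* [x,y]_r = pi_1([x,y]) + r pi_2([x,y]):  coefficient of a letter in
   the bracket of L_r from its coefficient in the commutator in A *)
Definition rcoef (r : CC) (p : CC * llet) : CC :=
  if p.2 is None then r * p.1 else p.1.

(* Generators of the left ideal  I + T(L)(L_r^+ - chi)  of the tensor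
   algebra T(L_r) such that M_r = T(L_r) / (that left ideal), where I is
   the two-sided ideal defining U(L_r).  In the bracket relation, z is
   the expansion of the commutator xy - yx (computed in A) in the basis
   B u {1} of L. *)
Inductive genM (d : nat) (r : CC) : Vec llet -> Prop :=
| genM_br (u w : seq llet) (x y : llet) (z : seq (CC * llet)) :
    valid_L d x -> valid_L d y -> all (valid_L d) (map snd z) ->
    eqA d (comb [:: (1, wordA x ++ wordA y); (-1, wordA y ++ wordA x)])
          (comb [seq (p.1, wordA p.2) | p <- z]) ->
    genM d r (fun t => e (u ++ x :: y :: w) t - e (u ++ y :: x :: w) t
                       - \sum_(p <- z) rcoef r p * e (u ++ p.2 :: w) t)
| genM_plus (u : seq llet) (b : llet) :
    Bplus d b -> genM d r (e (rcons u b))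
| genM_const (u : seq llet) :
    genM d r (fun t => e (rcons u None) t - e u t).

(* equality in M_r of (the classes of) two elements of T(L_r);
   the vector 1 of M_r is the class of e [::] *)
Definition eqM (d : nat) (r : CC) (x y : Vec llet) : Prop :=
  span (genM d r) (fun t => x t - y t).

(* The element v^{ij}(m,n) of L expressed in the basis B u {1}, using
   v^{ij}(m,n) = v^{ji}(n,m) unless i = j, m = -n, and
   v^{ii}(m,-m) = v^{ii}(-m,m) + m. *)
Definition vel (i j : nat) (m n : int) : seq (CC * llet) :=
  if (i < j)%N then [:: (1, Some (i, j, m, n))]
  else if (j < i)%N then [:: (1, Some (j, i, n, m))]
  else if m <= n then [:: (1, Some (i, i, m, n))]
  else if m + n == 0 then [:: (1, Some (i, i, n, m)); (m%:~R, None)]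
  else [:: (1, Some (i, i, n, m))].

Definition act (z : seq (CC * llet)) (v : Vec llet) : Vec llet :=
  fun t => match t with
           | [::] => 0
           | l :: t' => \sum_(p <- z | p.2 == l) p.1 * v t'
           end.

Definition vact (i j : nat) (m n : int) (v : Vec llet) : Vec llet :=
  act (vel i j m n) v.

(* Lrel d r i j m v w  :  L_r^{ij}(m) v = w  in M_r, where the infinite
   sum is well defined: all but finitely many terms vanish in M_r, and
   w equals the sum of the remaining ones. *)
Definition Lrel (d : nat) (r : CC) (i j : nat) (m : int)
    (v w : Vec llet) : Prop :=
  if (i != j) || (m != 0) then
    exists H : nat,
      (forall h : int, (H < absz h)%N -> eqM d r (vact i j (m - h) h v) (fun _ => 0))
      /\ eqM d r w (fun t => 2^-1 *
              \sum_(k < (H + H).+1)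
                 vact i j (m - (k%:Z - H%:Z)) (k%:Z - H%:Z) v t)
  else
    exists H : nat,
      (forall h : nat, (H < h)%N -> eqM d r (vact i i (- h%:Z) h%:Z v) (fun _ => 0))
      /\ eqM d r w (fun t => 2^-1 * vact i i 0 0 v t +
              \sum_(1 <= h < H.+1) vact i i (- h%:Z) h%:Z v t).

From Pilot Require Import Defs.
From HB Require Import structures.
From mathcomp Require Import all_boot all_order all_algebra.
From mathcomp Require Import complex.
From mathcomp Require Import reals Rstruct.
From mathcomp Require Import ring zify.
From Stdlib Require Import FunctionalExtensionality.

(* The vacuum [1] of [M_r] is killed by [B_+], so [x y 1 = [x, y]_r 1] for
   [x] in [B_+], and [[x, y]] is computed in [A] from
   [[v^i(a), v^j(b)] = delta_ij delta_(a+b,0) a].  Every term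
   [v^kl(p - h, h)] of the operators [L_r^kl(p)] acting below lies in [B_+],
   except [v^ij(-1,-1)] in (1); hence each term sends the vector it acts on to
   a multiple of a single basis vector, nonzero for at most two values of [h],
   and summing these multiples over [h] gives the three identities. *)

Set Implicit Arguments.
Unset Strict Implicit.
Unset Printing Implicit Defensive.
Import Order.TTheory GRing.Theory Num.Theory.
Local Open Scope ring_scope.

Section SpanCongruence.
Variables (T : eqType) (G : Vec T -> Prop).

Definition eqmod (x y : Vec T) := Defs.span G (fun t => x t - y t).

Lemma span_ext (f g : Vec T) : Defs.span G f -> f =1 g -> Defs.span G g.
Proof. by move=> Gf /functional_extensionality <-. Qed.

Lemma eqmod_ext x y : x =1 y -> eqmod x y.
Proof. by move=> xy; apply: span_ext (@span0 _ G) _ => t; rewrite xy subrr. Qed.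

Lemma eqmod_sym x y : eqmod x y -> eqmod y x.
Proof. by move=> Hxy; apply: span_ext (span_scale (-1) Hxy) _ => t; ring. Qed.

Lemma eqmod_trans x y z : eqmod x y -> eqmod y z -> eqmod x z.
Proof. by move=> Hxy Hyz; apply: span_ext (span_add Hxy Hyz) _ => t; ring. Qed.

Lemma eqmodD x1 y1 x2 y2 : eqmod x1 y1 -> eqmod x2 y2 ->
  eqmod (fun t => x1 t + x2 t) (fun t => y1 t + y2 t).
Proof. by move=> H1 H2; apply: span_ext (span_add H1 H2) _ => t; ring. Qed.

Lemma eqmodZ a x y : eqmod x y -> eqmod (fun t => a * x t) (fun t => a * y t).
Proof. by move=> Hxy; apply: span_ext (span_scale a Hxy) _ => t; ring. Qed.

Lemma eqmod_sum (I : Type) (s : seq I) (F1 F2 : I -> Vec T) :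
  (forall k, eqmod (F1 k) (F2 k)) ->
  eqmod (fun t => \sum_(k <- s) F1 k t) (fun t => \sum_(k <- s) F2 k t).
Proof.
move=> F12; elim: s => [|k s IHs]; first by apply: eqmod_ext => t; rewrite !big_nil.
apply: eqmod_trans (eqmod_trans (eqmodD (F12 k) IHs) _).
  by apply: eqmod_ext => t; rewrite big_cons.
by apply: eqmod_ext => t; rewrite big_cons.
Qed.

End SpanCongruence.

Definition hbr_coef (i : nat) (a : int) (j : nat) (b : int) : CC :=
  if (i == j) && (a + b == 0) then a%:~R else 0.

Lemma hbr_coef_diag i a b : hbr_coef i a i b = (a + b == 0)%:R * a%:~R.
Proof. by rewrite /hbr_coef eqxx; case: eqP => _; rewrite ?mul1r ?mul0r. Qed.

Lemma hbr_coef_offdiag i j a b : i != j -> hbr_coef i a j b = 0.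
Proof. by rewrite /hbr_coef => /negPf ->. Qed.

Lemma hbr_coef_neq0 i a j b : hbr_coef i a j b != 0 -> i = j /\ a + b = 0.
Proof. by rewrite /hbr_coef; case: andP => [[/eqP -> /eqP ->]|]; rewrite ?eqxx. Qed.

Lemma eqA_swap d u w i a j b : (1 <= i <= d)%N -> (1 <= j <= d)%N ->
  eqA d (e (u ++ Some (i, a) :: Some (j, b) :: w))
        (fun t => e (u ++ Some (j, b) :: Some (i, a) :: w) t
                  + hbr_coef i a j b * e (u ++ w) t).
Proof.
move=> hi hj; have br := span_gen (genA_br u w (a := Some (i, a)) (b := Some (j, b)) hi hj).
have c1 := span_gen (genA_c d u w).
rewrite /= in br; rewrite /hbr_coef; case: ifP br => _ br.
  by apply: span_ext (span_add br (span_scale a%:~R c1)) _ => t; rewrite big_cons big_nil /=; ring.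
by apply: span_ext br _ => t; rewrite big_nil; ring.
Qed.

Lemma eqA_commutator d i1 a1 j1 b1 i2 a2 j2 b2 :
  (1 <= i1 <= d)%N -> (1 <= j1 <= d)%N -> (1 <= i2 <= d)%N -> (1 <= j2 <= d)%N ->
  let x1 := Some (i1, a1) in let y1 := Some (j1, b1) in
  let x2 := Some (i2, a2) in let y2 := Some (j2, b2) in
  eqA d (fun t => e [:: x1; y1; x2; y2] t - e [:: x2; y2; x1; y1] t)
    (fun t => hbr_coef i1 a1 j2 b2 * e [:: x2; y1] t + hbr_coef i1 a1 i2 a2 * e [:: y2; y1] t
            + hbr_coef j1 b1 j2 b2 * e [:: x1; x2] t + hbr_coef j1 b1 i2 a2 * e [:: x1; y2] t).
Proof.
move=> hi1 hj1 hi2 hj2 x1 y1 x2 y2.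
have s1 := eqA_swap [:: x1] [:: y2] b1 a2 hj1 hi2.
have s2 := eqA_swap [:: x1; x2] [::] b1 b2 hj1 hj2.
have s3 := eqA_swap [::] [:: y2; y1] a1 a2 hi1 hi2.
have s4 := eqA_swap [:: x2] [:: y1] a1 b2 hi1 hj2.
by apply: span_ext (span_add s1 (span_add s2 (span_add s3 s4))) _ => t /=; ring.
Qed.

Definition vlet (i j : nat) (a b : int) : llet :=
  if (i < j)%N then Some (i, j, a, b)
  else if (j < i)%N then Some (j, i, b, a)
  else if a <= b then Some (i, i, a, b) else Some (i, i, b, a).

(* Fails only for [v^ii(a,-a)] with [a > 0], which is [v^ii(-a,a) + a]. *)
Definition vsingle (i j : nat) (a b : int) := (i != j) || (a <= b) || (a + b != 0).

Lemma vel_single i j a b : vsingle i j a b -> vel i j a b = [:: (1, vlet i j a b)].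
Proof.
rewrite /vsingle /vel /vlet; case: ltngtP => //= ?; subst j.
by case: ifP => //= _ /negPf ->.
Qed.

Lemma vlet_sym i j a b : vlet j i b a = vlet i j a b.
Proof.
rewrite /vlet; case: ltngtP => //= ?; subst j.
case: lerP => ab; case: lerP => ba //; last by lia.
by have -> : a = b by apply/eqP; rewrite eq_le ab ba.
Qed.

Lemma valid_vlet d i j a b : (1 <= i <= d)%N -> (1 <= j <= d)%N -> valid_L d (vlet i j a b).
Proof.
move=> hi hj; rewrite /vlet; case: ltngtP => ij /=; rewrite ?hi ?hj ?ij //= -ij.
by case: lerP => ab /=; rewrite hi eqxx ?ab ?(ltW ab) orbT.
Qed.

Lemma Bplus_vlet d i j a b : (1 <= i <= d)%N -> (1 <= j <= d)%N ->
  (0 <= a) || (0 <= b) -> Bplus d (vlet i j a b).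
Proof.
move=> hi hj ab; have := valid_vlet a b hi hj; rewrite /Bplus /vlet.
case: (i < j)%N; first by move=> /= ->.
case: (j < i)%N; first by move=> /= ->; rewrite orbC.
by case: (a <= b) => /= ->; rewrite // orbC.
Qed.

Lemma rcoef_vlet r c i j a b : rcoef r (c, vlet i j a b) = c.
Proof. by rewrite /vlet; case: (i < j)%N; case: (j < i)%N; case: (a <= b). Qed.

Lemma vact_e i j a b w : vsingle i j a b -> vact i j a b (e w) = e (vlet i j a b :: w).
Proof.
move=> ijab; rewrite /vact vel_single //; apply: functional_extensionality => -[|l t] //=.
rewrite big_cons big_nil /e /= eqseq_cons [vlet i j a b == l]eq_sym.
by case: (l == _); rewrite ?mul1r ?addr0.
Qed.

Lemma wordA_vlet d u w i j a b : (1 <= i <= d)%N -> (1 <= j <= d)%N -> vsingle i j a b ->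
  eqA d (e (u ++ wordA (vlet i j a b) ++ w)) (e (u ++ Some (i, a) :: Some (j, b) :: w)).
Proof.
rewrite /vsingle /vlet => hi hj; case: ltngtP => ij /= ijab.
- exact: eqmod_ext.
- apply: (eqmod_trans (eqA_swap u w b a hj hi)); apply: eqmod_ext => t.
  by rewrite hbr_coef_offdiag ?mul0r ?addr0 // ltn_eqF.
- move: ijab; rewrite -ij; case: lerP => ab /= ijab; first exact: eqmod_ext.
  apply: (eqmod_trans (eqA_swap u w b a hi hi)); apply: eqmod_ext => t.
  by rewrite hbr_coef_diag [b + a]addrC (negPf ijab) !mul0r addr0.
Qed.

Lemma eqA_scale_wordA_vlet d c i j a b : (1 <= i <= d)%N -> (1 <= j <= d)%N ->
  (c != 0 -> vsingle i j a b) ->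
  eqA d (fun t => c * e [:: Some (i, a); Some (j, b)] t)
        (fun t => c * e (wordA (vlet i j a b)) t).
Proof.
move=> hi hj; have [-> _|_ /(_ isT) ijab] := eqVneq c 0.
  by apply: eqmod_ext => t; rewrite !mul0r.
apply/eqmodZ/eqmod_sym; have := wordA_vlet [::] [::] hi hj ijab; by rewrite /= cats0.
Qed.

Lemma eqM_Bplus_bracket d r x y (z : seq (CC * llet)) :
  Bplus d x -> valid_L d y -> all (valid_L d) (map snd z) ->
  eqA d (comb [:: (1, wordA x ++ wordA y); (-1, wordA y ++ wordA x)])
        (comb [seq (p.1, wordA p.2) | p <- z]) ->
  eqM d r (e [:: x; y]) (fun t => \sum_(p <- z) rcoef r p * e [:: p.2] t).
Proof.
move=> Bx vy vz xy; have vx : valid_L d x by case: x Bx {xy} => // -[[[? ?] ?] ?] /andP[].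
have br := span_gen (genM_br r [::] [::] vx vy vz xy).
have plus := span_gen (genM_plus r [:: y] Bx).
by apply: span_ext (span_add br plus) _ => t /=; ring.
Qed.

(* The side conditions say that [[x, y]] has no constant term. *)
Lemma eqM_bracket_vlet d r i1 j1 a1 b1 i2 j2 a2 b2 :
  (1 <= i1 <= d)%N -> (1 <= j1 <= d)%N -> (1 <= i2 <= d)%N -> (1 <= j2 <= d)%N ->
  vsingle i1 j1 a1 b1 -> vsingle i2 j2 a2 b2 -> (0 <= a1) || (0 <= b1) ->
  (hbr_coef i1 a1 j2 b2 != 0 -> vsingle i2 j1 a2 b1) ->
  (hbr_coef i1 a1 i2 a2 != 0 -> vsingle j2 j1 b2 b1) ->
  (hbr_coef j1 b1 j2 b2 != 0 -> vsingle i1 i2 a1 a2) ->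
  (hbr_coef j1 b1 i2 a2 != 0 -> vsingle i1 j2 a1 b2) ->
  eqM d r (e [:: vlet i1 j1 a1 b1; vlet i2 j2 a2 b2])
    (fun t => hbr_coef i1 a1 j2 b2 * e [:: vlet i2 j1 a2 b1] t
            + hbr_coef i1 a1 i2 a2 * e [:: vlet j2 j1 b2 b1] t
            + hbr_coef j1 b1 j2 b2 * e [:: vlet i1 i2 a1 a2] t
            + hbr_coef j1 b1 i2 a2 * e [:: vlet i1 j2 a1 b2] t).
Proof.
move=> hi1 hj1 hi2 hj2 s1 s2 pos1 t1 t2 t3 t4.
pose x := vlet i1 j1 a1 b1; pose y := vlet i2 j2 a2 b2.
pose z := [:: (hbr_coef i1 a1 j2 b2, vlet i2 j1 a2 b1);
              (hbr_coef i1 a1 i2 a2, vlet j2 j1 b2 b1);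
              (hbr_coef j1 b1 j2 b2, vlet i1 i2 a1 a2);
              (hbr_coef j1 b1 i2 a2, vlet i1 j2 a1 b2)].
have commA : eqA d (comb [:: (1, wordA x ++ wordA y); (-1, wordA y ++ wordA x)])
                   (comb [seq (p.1, wordA p.2) | p <- z]).
  have xy1 := wordA_vlet [::] (wordA y) hi1 hj1 s1.
  have xy2 := wordA_vlet [:: Some (i1, a1); Some (j1, b1)] [::] hi2 hj2 s2.
  have yx1 := wordA_vlet [::] (wordA x) hi2 hj2 s2.
  have yx2 := wordA_vlet [:: Some (i2, a2); Some (j2, b2)] [::] hi1 hj1 s1.
  have comm := eqA_commutator a1 b1 a2 b2 hi1 hj1 hi2 hj2.
  have u1 := eqA_scale_wordA_vlet hi2 hj1 t1; have u2 := eqA_scale_wordA_vlet hj2 hj1 t2.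
  have u3 := eqA_scale_wordA_vlet hi1 hi2 t3; have u4 := eqA_scale_wordA_vlet hi1 hj2 t4.
  apply: span_ext (span_add xy1 (span_add xy2 (span_add (span_scale (-1) yx1)
    (span_add (span_scale (-1) yx2) (span_add comm
    (span_add u1 (span_add u2 (span_add u3 u4)))))))) _ => t.
  by rewrite /comb !big_cons big_nil /= !cats0; ring.
apply: (eqmod_trans (eqM_Bplus_bracket r _ _ _ commA)).
- exact: Bplus_vlet.
- exact: valid_vlet.
- by rewrite /= !valid_vlet.
by apply: eqmod_ext => t; rewrite !big_cons big_nil !rcoef_vlet; ring.
Qed.

Lemma vact_linear i j a b (x y : CC) (f g : Vec llet) :
  vact i j a b (fun t => x * f t + y * g t)
  = fun t => x * vact i j a b f t + y * vact i j a b g t.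
Proof.
apply: functional_extensionality => -[|l t] /=; first by rewrite !mulr0 addr0.
by rewrite !mulr_sumr -big_split; apply: eq_bigr => p _ /=; ring.
Qed.

Lemma Lrel_of_coefs d r i j (m : int) v (H : nat) (c1 c2 : int -> CC) (V1 V2 : Vec llet) :
  (i != j) || (m != 0) ->
  (forall h, eqM d r (vact i j (m - h) h v) (fun t => c1 h * V1 t + c2 h * V2 t)) ->
  (forall h : int, (H < absz h)%N -> c1 h = 0 /\ c2 h = 0) ->
  Lrel d r i j m v (fun t => 2^-1 * (\sum_(k < (H + H).+1) c1 (k%:Z - H%:Z)) * V1 t
                           + 2^-1 * (\sum_(k < (H + H).+1) c2 (k%:Z - H%:Z)) * V2 t).
Proof.
move=> ijm vh cH; rewrite /Lrel ijm; exists H; split.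
  move=> h /cH[c1h c2h]; apply: (eqmod_trans (vh h)); apply: eqmod_ext => t.
  by rewrite c1h c2h; ring.
have sum_vh := eqmod_sum (index_enum 'I_(H + H).+1) (fun k => vh (k%:Z - H%:Z)).
apply: eqmod_sym; apply: (eqmod_trans (eqmodZ _ sum_vh)).
by apply: eqmod_ext => t; rewrite big_split /= -!mulrA !mulr_suml -mulrDr.
Qed.

Lemma Lrel0_of_coefs d r i v (H : nat) (c : nat -> CC) (V : Vec llet) :
  (forall h : nat, eqM d r (vact i i (- h%:Z) h%:Z v) (fun t => c h * V t)) ->
  (forall h : nat, (H < h)%N -> c h = 0) ->
  Lrel d r i i 0 v (fun t => (2^-1 * c 0%N + \sum_(1 <= h < H.+1) c h) * V t).
Proof.
move=> vh cH; rewrite /Lrel eqxx /=; exists H; split.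
  move=> h hH; apply: (eqmod_trans (vh h)); apply: eqmod_ext => t.
  by rewrite cH ?mul0r.
apply: eqmod_sym; apply: (eqmod_trans (eqmodD (eqmodZ _ (vh 0%N)) (eqmod_sum _ vh))).
by apply: eqmod_ext => t; rewrite mulrDl mulrA -mulr_suml.
Qed.

Lemma sum_window_indicator (R : pzSemiRingType) (H : nat) (c : int) :
  (absz c <= H)%N ->
  \sum_(k < (H + H).+1) ((k%:Z - H%:Z == c)%:R : R) = 1.
Proof.
move=> cH; have ck : (absz (c + H%:Z)%R < (H + H).+1)%N by lia.
rewrite (bigD1 (Ordinal ck)) //= (_ : (_ == c) = true); last by lia.
rewrite big1 ?addr0 // => k /eqP kc; rewrite (_ : (_ == c) = false) //.
by apply/eqP => kc'; apply: kc; apply: val_inj => /=; lia.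
Qed.

Lemma sum_pos_indicator (R : pzSemiRingType) (H : nat) (c : int) :
  0 < c -> (absz c <= H)%N ->
  \sum_(1 <= h < H.+1) ((h%:Z == c)%:R : R) = 1.
Proof.
move=> c0 cH; rewrite (bigD1_seq (absz c)) /= ?iota_uniq //; last by rewrite mem_index_iota; lia.
rewrite (_ : (_ == c) = true); last by lia.
by rewrite big1 ?addr0 // => h /eqP hc; rewrite (_ : (_ == c) = false) //; lia.
Qed.

Lemma boolr_mulr_eq (R : pzSemiRingType) (b : bool) (x y : R) :
  (b -> x = y) -> b%:R * x = b%:R * y.
Proof. by case: b => [->|_] //=; rewrite !mul0r. Qed.

Lemma intrCC_eq0 (k : int) : (k%:~R == 0 :> CC) = (k == 0).
Proof. exact: (@intr_eq0 (Rdefinitions.R)[i]%C). Qed.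

Lemma natrCC_eq0 (n : nat) : (n%:R == 0 :> CC) = (n == 0)%N.
Proof. exact: (intrCC_eq0 n). Qed.

Lemma vact_Lij_neg2_term d r i j h : (1 <= i <= d)%N -> (1 <= j <= d)%N ->
  eqM d r (vact i j (-2 - h) h (e [::])) (fun t => (h == -1)%:R * e [:: vlet i j (-1) (-1)] t).
Proof.
move=> hi hj; have s : vsingle i j (-2 - h) h by rewrite /vsingle; lia.
rewrite (vact_e _ s); have [->|h1] := eqVneq h (-1).
  by rewrite (_ : -2 - -1 = -1); [apply: eqmod_ext => t /=; ring | ring].
have Bp : Bplus d (vlet i j (-2 - h) h) by apply: Bplus_vlet => //; lia.
by apply: span_ext (span_gen (genM_plus r [::] Bp)) _ => t /=; ring.
Qed.

Lemma vact_Lii_neg1_term d r i j m n h :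
  (1 <= i <= d)%N -> (1 <= j <= d)%N -> i != j -> m < 0 -> n < 0 ->
  eqM d r (vact i i (-1 - h) h (vact i j m n (e [::])))
    (fun t => (h == -m)%:R * (-m)%:~R * e [:: vlet i j (m - 1) n] t
            + (h == m - 1)%:R * (-m)%:~R * e [:: vlet i j (m - 1) n] t).
Proof.
move=> hi hj ij m0 n0.
have s1 : vsingle i j m n by rewrite /vsingle ij.
have s2 : vsingle i i (-1 - h) h by rewrite /vsingle; lia.
rewrite (vact_e _ s1) (vact_e _ s2).
apply: (eqmod_trans (eqM_bracket_vlet r hi hi hi hj s2 s1 _ _ _ _ _));
  try by [lia | move=> /hbr_coef_neq0[? ?]; rewrite /vsingle; lia].
apply: eqmod_ext => t; rewrite !hbr_coef_diag !hbr_coef_offdiag //.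
rewrite (_ : (-1 - h + m == 0) = (h == m - 1)); last by lia.
rewrite (_ : (h + m == 0) = (h == -m)); last by lia.
rewrite !mul0r !add0r addr0 addrC -!mulrA.
congr (_ + _); apply: boolr_mulr_eq => /eqP ->; first by rewrite opprK addrC.
by rewrite vlet_sym (_ : -1 - (m - 1) = -m) //; ring.
Qed.

Lemma vact_Lij_neg1_term d r i j m n h :
  (1 <= i <= d)%N -> (1 <= j <= d)%N -> i != j -> m < 0 -> n < 0 ->
  eqM d r (vact i j (-1 - h) h (vact i j n m (e [::])))
    (fun t => (h == -m)%:R * (-m)%:~R * e [:: vlet i i (m - 1) n] t
            + (h == n - 1)%:R * (-n)%:~R * e [:: vlet j j m (n - 1)] t).
Proof.
move=> hi hj ij m0 n0.
have s1 : vsingle i j n m by rewrite /vsingle ij.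
have s2 : vsingle i j (-1 - h) h by rewrite /vsingle ij.
rewrite (vact_e _ s1) (vact_e _ s2).
apply: (eqmod_trans (eqM_bracket_vlet r hi hj hi hj s2 s1 _ _ _ _ _));
  try by [lia | move=> /hbr_coef_neq0[? ?]; rewrite /vsingle; lia].
have ji : j != i by rewrite eq_sym.
apply: eqmod_ext => t; rewrite !hbr_coef_diag !hbr_coef_offdiag //.
rewrite (_ : (-1 - h + n == 0) = (h == n - 1)); last by lia.
rewrite (_ : (h + m == 0) = (h == -m)); last by lia.
rewrite !mul0r !add0r addr0 addrC -!mulrA.
congr (_ + _); apply: boolr_mulr_eq => /eqP ->; first by rewrite opprK addrC.
by rewrite (_ : -1 - (n - 1) = -n) //; ring.
Qed.

Lemma vact_Lii0_term d r i m n (h : nat) : (1 <= i <= d)%N -> m < 0 -> n < 0 ->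
  eqM d r (vact i i (- h%:Z) h%:Z (e [:: vlet i i (m - 1) n]))
    (fun t => ((h%:Z == -n)%:R * (-n)%:~R + (h%:Z == 1 - m)%:R * (1 - m)%:~R)
              * e [:: vlet i i (m - 1) n] t).
Proof.
move=> hi m0 n0.
have s1 : vsingle i i (- h%:Z) h%:Z by rewrite /vsingle; lia.
have s2 : vsingle i i (m - 1) n by rewrite /vsingle; lia.
rewrite (vact_e _ s1).
apply: (eqmod_trans (eqM_bracket_vlet r hi hi hi hi s1 s2 _ _ _ _ _));
  try by [lia | move=> /hbr_coef_neq0[? ?]; rewrite /vsingle; lia].
apply: eqmod_ext => t; rewrite !hbr_coef_diag.
rewrite (_ : (- h%:Z + n == 0) = false); last by lia.
rewrite (_ : (- h%:Z + (m - 1) == 0) = false); last by lia.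
rewrite (_ : (h%:Z + n == 0) = (h%:Z == -n)); last by lia.
rewrite (_ : (h%:Z + (m - 1) == 0) = (h%:Z == 1 - m)); last by lia.
rewrite /= !mul0r !add0r mulrDl -!mulrA.
by congr (_ + _); apply: boolr_mulr_eq => /eqP ->; rewrite ?opprK ?opprB // vlet_sym.
Qed.

Lemma vact_Lii0_offdiag d r i j a b (h : nat) :
  (1 <= i <= d)%N -> (1 <= j <= d)%N -> i != j -> vsingle j j a b ->
  eqM d r (vact i i (- h%:Z) h%:Z (e [:: vlet j j a b])) (fun _ => 0).
Proof.
move=> hi hj ij s2; have s1 : vsingle i i (- h%:Z) h%:Z by rewrite /vsingle; lia.
have ji : j != i by rewrite eq_sym.
rewrite (vact_e _ s1).
apply: (eqmod_trans (eqM_bracket_vlet r hi hi hj hj s1 s2 _ _ _ _ _));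
  try by [lia | move=> /hbr_coef_neq0[? ?]; rewrite /vsingle; lia].
by apply: eqmod_ext => t; rewrite !hbr_coef_offdiag // !mul0r !addr0.
Qed.

Lemma v_neg1_neg1_eq_L_neg2 d r i j : (1 <= i <= d)%N -> (1 <= j <= d)%N ->
  exists w, Lrel d r i j (-2) (e [::]) w /\
    eqM d r (vact i j (-1) (-1) (e [::])) (fun t => 2 * w t).
Proof.
move=> hi hj; eexists; split.
  apply: (Lrel_of_coefs (H := 1) (c1 := fun h => (h == -1)%:R) (c2 := fun _ => 0)
                        (V2 := e [::])) => [|h|h hH]; first by lia.
    apply: (eqmod_trans (vact_Lij_neg2_term r h hi hj)).
    by apply: eqmod_ext => t; rewrite mul0r addr0.
  by rewrite (_ : (h == -1) = false) //; lia.
have s : vsingle i j (-1) (-1) by rewrite /vsingle; lia.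
rewrite (vact_e _ s); apply: eqmod_ext => t /=.
rewrite sum_window_indicator // big1_eq mulr0 mul0r addr0 mulr1 mulrA mulfV ?mul1r //.
by rewrite natrCC_eq0.
Qed.

Lemma v_shift_eq_Lii_neg1 d r i j m n :
  (1 <= i <= d)%N -> (1 <= j <= d)%N -> i != j -> m < 0 -> n < 0 ->
  exists w, Lrel d r i i (-1) (vact i j m n (e [::])) w /\
    eqM d r (vact i j (m - 1) n (e [::])) (fun t => - (m%:~R)^-1 * w t).
Proof.
move=> hi hj ij m0 n0; pose H := (absz m).+1; eexists; split.
  apply: (Lrel_of_coefs (H := H)
           (c1 := fun h => (h == -m)%:R * (-m)%:~R)
           (c2 := fun h => (h == m - 1)%:R * (-m)%:~R)) => [|h|h hH]; first by lia.
    exact: vact_Lii_neg1_term.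
  have [-> ->] : (h == -m) = false /\ (h == m - 1) = false by split; lia.
  by rewrite /= !mul0r.
have S1 : \sum_(k < (H + H).+1) ((k%:Z - H%:Z == -m)%:R : CC) = 1.
  by apply: sum_window_indicator; lia.
have S2 : \sum_(k < (H + H).+1) ((k%:Z - H%:Z == m - 1)%:R : CC) = 1.
  by apply: sum_window_indicator; lia.
have s : vsingle i j (m - 1) n by rewrite /vsingle ij.
rewrite (vact_e _ s); apply: eqmod_ext => t /=; rewrite -!mulr_suml S1 S2.
have mneq0 : (m%:~R : CC) != 0 by rewrite intrCC_eq0; lia.
by rewrite intrN; field.
Qed.

Lemma v_ii_shift_eq_Lii0_Lij_neg1 d r i j m n :
  (1 <= i <= d)%N -> (1 <= j <= d)%N -> i != j -> m < 0 -> n < 0 ->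
  exists w1 w2, Lrel d r i j (-1) (vact i j n m (e [::])) w1 /\
    Lrel d r i i 0 w1 w2 /\
    eqM d r (vact i i (m - 1) n (e [::])) (fun t => 2 / (m * (m + n - 1))%:~R * w2 t).
Proof.
move=> hi hj ij m0 n0; pose H := (absz m + absz n).+1.
pose V1 := e [:: vlet i i (m - 1) n]; pose V2 := e [:: vlet j j m (n - 1)].
pose S1 : CC := 2^-1 * \sum_(k < (H + H).+1) ((k%:Z - H%:Z == -m)%:R * (-m)%:~R).
pose S2 : CC := 2^-1 * \sum_(k < (H + H).+1) ((k%:Z - H%:Z == n - 1)%:R * (-n)%:~R).
have L1 : Lrel d r i j (-1) (vact i j n m (e [::])) (fun t => S1 * V1 t + S2 * V2 t).
  apply: (Lrel_of_coefs (H := H) (c1 := fun h => (h == -m)%:R * (-m)%:~R)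
           (c2 := fun h => (h == n - 1)%:R * (-n)%:~R)) => [|h|h hH]; first by rewrite ij.
    exact: vact_Lij_neg1_term.
  have [-> ->] : (h == -m) = false /\ (h == n - 1) = false by split; lia.
  by rewrite /= !mul0r.
pose c (h : nat) := ((h%:Z == -n)%:R * (-n)%:~R + (h%:Z == 1 - m)%:R * (1 - m)%:~R) * S1.
have L0 : Lrel d r i i 0 (fun t => S1 * V1 t + S2 * V2 t)
            (fun t => (2^-1 * c 0%N + \sum_(1 <= h < H.+2) c h) * V1 t).
  apply: (Lrel0_of_coefs (c := c)) => [h|h hH]; rewrite /c.
    rewrite vact_linear; apply: eqmod_trans (eqmodD (eqmodZ S1 (vact_Lii0_term r h hi m0 n0))
      (eqmodZ S2 (vact_Lii0_offdiag r h hi hj ij _))) _; first by rewrite /vsingle; lia.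
    by apply: eqmod_ext => t; rewrite /c mulr0 addr0 mulrA [S1 * _]mulrC.
  have [-> ->] : (h%:Z == -n) = false /\ (h%:Z == 1 - m) = false by split; lia.
  by rewrite /= !mul0r add0r mul0r.
do 2 eexists; split; [exact: L1 | split; first exact: L0].
have Sw : \sum_(k < (H + H).+1) ((k%:Z - H%:Z == -m)%:R : CC) = 1.
  by apply: sum_window_indicator; lia.
have Sn : \sum_(1 <= h < H.+2) ((h%:Z == -n)%:R : CC) = 1.
  by apply: sum_pos_indicator; lia.
have Sm : \sum_(1 <= h < H.+2) ((h%:Z == 1 - m)%:R : CC) = 1.
  by apply: sum_pos_indicator; lia.
have s : vsingle i i (m - 1) n by rewrite /vsingle; lia.
rewrite (vact_e _ s); apply: eqmod_ext => t; rewrite /c /S1 /=.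
have [-> ->] : (0%N%:Z == -n) = false /\ (0%N%:Z == 1 - m) = false by split; lia.
rewrite -!mulr_suml Sw big_split /= -!mulr_suml Sn Sm.
have mneq0 : (m%:~R : CC) != 0 by rewrite intrCC_eq0; lia.
have mn1neq0 : ((m + n - 1)%:~R : CC) != 0 by rewrite intrCC_eq0; lia.
rewrite !intrM !intrB !intrD !intrN in mn1neq0 *.
by field; rewrite mn1neq0 mneq0.
Qed.

Theorem lemma3p2 (d : nat) (r : CC) : (2 <= d)%N ->
  (forall i j : nat, (1 <= i <= d)%N -> (1 <= j <= d)%N ->
     exists w, Lrel d r i j (-2) (e [::]) w /\
       eqM d r (vact i j (-1) (-1) (e [::])) (fun t => 2 * w t))
  /\
  (forall (i j : nat) (m n : int), (1 <= i <= d)%N -> (1 <= j <= d)%N ->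
     i != j -> m < 0 -> n < 0 ->
     exists w, Lrel d r i i (-1) (vact i j m n (e [::])) w /\
       eqM d r (vact i j (m - 1) n (e [::])) (fun t => - (m%:~R)^-1 * w t))
  /\
  (forall (i j : nat) (m n : int), (1 <= i <= d)%N -> (1 <= j <= d)%N ->
     i != j -> m < 0 -> n < 0 ->
     exists w1 w2, Lrel d r i j (-1) (vact i j n m (e [::])) w1 /\
       Lrel d r i i 0 w1 w2 /\
       eqM d r (vact i i (m - 1) n (e [::]))
               (fun t => 2 / (m * (m + n - 1))%:~R * w2 t)).
Proof.
move=> _; split; [|split].
- exact: v_neg1_neg1_eq_L_neg2.
- exact: v_shift_eq_Lii_neg1.
- exact: v_ii_shift_eq_Lii0_Lij_neg1.
Qed.
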